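(* Let $a\in(0,1)$, $\kappa_2\in(0,1)$, and assume $\dfrac{4}{\kappa_2}\le r\le \dfrac{as}{\sqrt{5\log(8/\kappa_2)}}$. Then for every $\theta\in\mathcal{D}_{a,r}$, $$\|M(\theta)\|<\kappa_2\, r\,\|\theta^*\|.$$
   Context: Fix $d\ge1$, $\sigma>0$ and $\theta^*\in\mathbb{R}^d\setminus\{0\}$. Let $Y$ be distributed according to the mixture $\tfrac12 N(\theta^*,\sigma^2I_d)+\tfrac12 N(-\theta^*,\sigma^2I_d)$. Let $\omega(t):=1/(1+e^{-2t})$. The population EM operator is $M(\theta):=2\,\mathbb{E}\big[Y\,\omega(\langle\theta,Y\rangle/\sigma^2)\big]$. The signal-to-noise ratio is $s:=\|\theta^*\|/\sigma$. For $a\in(0,1)$ and $r\ge1$ define $\mathcal{H}_a:=\{\theta:\langle\theta,\theta^*\rangle\ge a\|\theta^*\|^2\}$, $\mathcal{B}_r:=\{\theta:\|\theta\|\le r\|\theta^*\|\}$ and $\mathcal{D}_{a,r}:=\mathcal{H}_a\cap\mathcal{B}_r$. *)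

(* classical reals. Vectors of R^d are functions nat -> R,
   only coordinates 0..d-1 being relevant. *)
From Stdlib Require Import Reals Lra.
Open Scope R_scope.

Fixpoint dot (d : nat) (u v : nat -> R) : R :=
  match d with
  | O => 0
  | S k => dot k u v + u k * v k
  end.

Definition vnorm (d : nat) (u : nat -> R) : R := sqrt (dot d u u).

Definition omega (t : R) : R := 1 / (1 + exp (-2 * t)).

Definition gauss_density (d : nat) (sigma : R) (mu y : nat -> R) : R :=
  exp (- dot d (fun i => y i - mu i) (fun i => y i - mu i) / (2 * sigma ^ 2))
  / (sqrt (2 * PI * sigma ^ 2)) ^ d.

Definition mix_density (d : nat) (sigma : R) (ts y : nat -> R) : R :=
  / 2 * gauss_density d sigma ts y + / 2 * gauss_density d sigma (fun i => - ts i) y.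

Definition is_improper_int (g : R -> R) (I : R) : Prop :=
  forall eps : R, 0 < eps -> exists A : R, forall a b : R, A <= a -> A <= b ->
    exists pr : Riemann_integrable g (- a) b, Rabs (RiemannInt pr - I) < eps.

Definition cons_vec (t : R) (y : nat -> R) : nat -> R :=
  fun i => match i with O => t | S j => y j end.

(* iterated improper integral of f over R^n (coordinates 0..n-1 of y):
   is_int_iter n f I  <->  int_{R^n} f(y) dy = I (as iterated integral) *)
Fixpoint is_int_iter (n : nat) (f : (nat -> R) -> R) (I : R) : Prop :=
  match n with
  | O => I = f (fun _ => 0)
  | S k => exists g : R -> R,
      (forall t : R, is_int_iter k (fun y => f (cons_vec t y)) (g t))
      /\ is_improper_int g I
  end.

(* m = M(theta) = 2 E[ Y omega(<theta,Y>/sigma^2) ], Y ~ mixture *)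
Definition is_EM (d : nat) (sigma : R) (ts theta m : nat -> R) : Prop :=
  forall i : nat, (i < d)%nat ->
    is_int_iter d
      (fun y => 2 * (y i * omega (dot d theta y / sigma ^ 2)) * mix_density d sigma ts y)
      (m i).

(* Since 0 <= omega <= 1, the pointwise inequality 2 |x| <= x^2 / c + c applied to x = <M(theta), Y>
   bounds |M(theta)|^2 by the explicit second moments of the Gaussian components, which gives
   |M(theta)|^2 <= 4 (|theta*|^2 + sigma^2).  The
   constraints on r force |theta*| > 4 sigma and kappa2 r >= 4, so this is below (kappa2 r |theta*|)^2.
   The integrals are iterated improper Riemann integrals; they exist, by induction on the dimension,
   for integrands which together with their coordinatewise Lipschitz constants are dominated by a
   Gaussian weight.  The one-dimensional Gaussian integral comes from Feynman's trick. *)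

From Coquelicot Require Import Coquelicot.
From Stdlib Require Import Reals Lra Psatz Lia Classical FunctionalExtensionality ClassicalEpsilon.
Open Scope R_scope.

(** * Improper integrals on the real line *)

Lemma exp_le_compat x y : x <= y -> exp x <= exp y.
Proof. intros [H|H]; [now apply Rlt_le, exp_increasing | now rewrite H; right]. Qed.

Lemma ex_RInt_continuous_R (f : R -> R) a b : (forall z, continuous f z) -> ex_RInt f a b.
Proof. intros H. apply (@ex_RInt_continuous R_CompleteNormedModule). intros; apply H. Qed.

Lemma is_derive_continuity_pt f x l : is_derive f x l -> continuity_pt f x.
Proof. intros H. apply is_derive_Reals in H. apply derivable_continuous_pt. now exists l. Qed.

Lemma RInt_plus_R (f g : R -> R) a b : ex_RInt f a b -> ex_RInt g a b ->
  RInt (fun x => f x + g x) a b = RInt f a b + RInt g a b.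
Proof. intros; now apply (RInt_plus (V:=R_CompleteNormedModule)). Qed.

Lemma RInt_scal_R (f : R -> R) c a b : ex_RInt f a b ->
  RInt (fun x => c * f x) a b = c * RInt f a b.
Proof. intros; now apply (RInt_scal (V:=R_CompleteNormedModule)). Qed.

Lemma RInt_ge_0_continuous (f : R -> R) a b : a <= b -> (forall z, continuous f z) ->
  (forall x, 0 <= f x) -> 0 <= RInt f a b.
Proof. intros. apply RInt_ge_0; auto. now apply ex_RInt_continuous_R. Qed.

Lemma RInt_Chasles_continuous (f : R -> R) a b c : (forall z, continuous f z) ->
  RInt f a b + RInt f b c = RInt f a c.
Proof. intros. apply (RInt_Chasles (V:=R_CompleteNormedModule)); now apply ex_RInt_continuous_R. Qed.

(* The same convergence as [is_improper_int], phrased with Coquelicot's total [RInt]. *)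
Definition is_RInt_improper (g : R -> R) (I : R) : Prop :=
  forall eps, 0 < eps -> exists A, forall a b, A <= a -> A <= b ->
    ex_RInt g (-a) b /\ Rabs (RInt g (-a) b - I) < eps.

Lemma is_RInt_improper_equiv g I : is_RInt_improper g I <-> is_improper_int g I.
Proof.
  split; intros H eps Heps; destruct (H eps Heps) as [A HA]; exists A; intros a b Ha Hb.
  - destruct (HA a b Ha Hb) as [Hex Hlt].
    exists (ex_RInt_Reals_0 _ _ _ Hex). now rewrite <- RInt_Reals.
  - destruct (HA a b Ha Hb) as [pr Hlt]. split.
    + now apply ex_RInt_Reals_1.
    + now rewrite (RInt_Reals _ _ _ pr).
Qed.

Lemma is_RInt_improper_plus f g I J : is_RInt_improper f I -> is_RInt_improper g J ->
  is_RInt_improper (fun x => f x + g x) (I + J).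
Proof.
  intros Hf Hg eps Heps.
  destruct (Hf (eps/2)) as [A1 H1]; [lra|]. destruct (Hg (eps/2)) as [A2 H2]; [lra|].
  exists (Rmax A1 A2). intros a b Ha Hb.
  destruct (H1 a b) as [E1 L1]; try (eapply Rle_trans; [apply Rmax_l|eauto]).
  destruct (H2 a b) as [E2 L2]; try (eapply Rle_trans; [apply Rmax_r|eauto]).
  split; [now apply (ex_RInt_plus (V:=R_CompleteNormedModule))|].
  rewrite RInt_plus_R by auto.
  apply Rabs_def2 in L1. apply Rabs_def2 in L2. apply Rabs_def1; lra.
Qed.

Lemma is_RInt_improper_scal f c I : is_RInt_improper f I ->
  is_RInt_improper (fun x => c * f x) (c * I).
Proof.
  intros Hf eps Heps. pose proof (Rabs_pos c) as Hc.
  destruct (Hf (eps / (Rabs c + 1))) as [A H]; [apply Rdiv_lt_0_compat; lra|].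
  exists A. intros a b Ha Hb. destruct (H a b Ha Hb) as [E L].
  split; [now apply (ex_RInt_scal (V:=R_CompleteNormedModule))|].
  rewrite RInt_scal_R by auto.
  replace (c * RInt f (-a) b - c * I) with (c * (RInt f (-a) b - I)) by ring.
  rewrite Rabs_mult. pose proof (Rabs_pos (RInt f (-a) b - I)).
  apply Rle_lt_trans with (Rabs c * (eps / (Rabs c + 1))); [now apply Rmult_le_compat_l, Rlt_le|].
  apply Rlt_le_trans with ((Rabs c + 1) * (eps / (Rabs c + 1))).
  - apply Rmult_lt_compat_r; [apply Rdiv_lt_0_compat|]; lra.
  - right; field; lra.
Qed.

Lemma is_RInt_improper_le f g I J : (forall x, f x <= g x) ->
  is_RInt_improper f I -> is_RInt_improper g J -> I <= J.
Proof.
  intros Hle Hf Hg. apply Rnot_lt_le. intros Hlt.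
  destruct (Hf ((I-J)/2)) as [A1 H1]; [lra|]. destruct (Hg ((I-J)/2)) as [A2 H2]; [lra|].
  set (A := Rmax 0 (Rmax A1 A2)).
  assert (A1 <= A) by (unfold A; eapply Rle_trans; [apply Rmax_l|apply Rmax_r]).
  assert (A2 <= A) by (unfold A; eapply Rle_trans; [apply Rmax_r|apply Rmax_r]).
  assert (0 <= A) by apply Rmax_l.
  destruct (H1 A A) as [E1 L1]; auto. destruct (H2 A A) as [E2 L2]; auto.
  assert (RInt f (-A) A <= RInt g (-A) A) by (apply RInt_le; auto; lra).
  apply Rabs_def2 in L1. apply Rabs_def2 in L2. lra.
Qed.

Lemma is_RInt_improper_ext f g I J : (forall x, f x = g x) -> I = J ->
  is_RInt_improper f I -> is_RInt_improper g J.
Proof.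
  intros He <- H eps Heps. destruct (H eps Heps) as [A HA]. exists A. intros a b Ha Hb.
  destruct (HA a b Ha Hb) as [E L]. split.
  - eapply ex_RInt_ext; [|exact E]. auto.
  - rewrite <- (RInt_ext f); auto.
Qed.

Lemma is_RInt_improper_derive F f Lp Lm :
  (forall x, is_derive F x (f x)) -> (forall x, continuous f x) ->
  (forall eps, 0 < eps -> exists A, forall x, A <= x -> Rabs (F x - Lp) < eps) ->
  (forall eps, 0 < eps -> exists A, forall x, A <= x -> Rabs (F (-x) - Lm) < eps) ->
  is_RInt_improper f (Lp - Lm).
Proof.
  intros HD HC Hp Hm eps Heps.
  destruct (Hp (eps/2)) as [A1 H1]; [lra|]. destruct (Hm (eps/2)) as [A2 H2]; [lra|].
  exists (Rmax A1 A2). intros a b Ha Hb. split; [now apply ex_RInt_continuous_R|].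
  rewrite (is_RInt_unique f (-a) b (F b - F (-a))) by (apply (is_RInt_derive F f); auto).
  assert (Rabs (F b - Lp) < eps/2) by (apply H1; eapply Rle_trans; [apply Rmax_l|eauto]).
  assert (Rabs (F (-a) - Lm) < eps/2) by (apply H2; eapply Rle_trans; [apply Rmax_r|eauto]).
  apply Rabs_def2 in H. apply Rabs_def2 in H0. apply Rabs_def1; lra.
Qed.

Lemma is_RInt_improper_comp_lin f I u v : 0 < u -> (forall z, continuous f z) ->
  is_RInt_improper f I -> is_RInt_improper (fun x => f (u * x + v)) (I / u).
Proof.
  intros Hu Hc H eps He.
  destruct (H (eps * u)) as [A HA]; [nra|].
  exists ((Rabs A + Rabs v) / u). intros a b Ha Hb.
  assert (Hcomp : forall z, continuous (fun x => f (u * x + v)) z).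
  { intros z. apply (continuous_comp (fun x => u * x + v) f); [|apply Hc].
    apply (ex_derive_continuous (fun x => u * x + v)). auto_derive; auto. }
  split; [now apply ex_RInt_continuous_R|].
  assert (Hbound : Rabs A + Rabs v <= u * a /\ Rabs A + Rabs v <= u * b).
  { split; [apply Rmult_le_compat_l with (r := u) in Ha | apply Rmult_le_compat_l with (r := u) in Hb];
      try lra; (replace (u * ((Rabs A + Rabs v) / u)) with (Rabs A + Rabs v) in * by (field; lra)); lra. }
  pose proof (Rle_abs A). pose proof (Rle_abs v). pose proof (Rle_abs (-v)). rewrite Rabs_Ropp in *.
  destruct (HA (u * a - v) (u * b + v)) as [_ L]; try lra.
  assert (E := RInt_comp_lin f u v (-a) b).
  replace (u * -a + v) with (-(u * a - v)) in E by ring.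
  rewrite <- E in L by now apply ex_RInt_continuous_R.
  rewrite (RInt_ext _ (fun y => u * f (u * y + v))), RInt_scal_R in L by (auto; now apply ex_RInt_continuous_R).
  replace (RInt (fun x => f (u * x + v)) (-a) b - I / u)
    with ((u * RInt (fun y => f (u * y + v)) (-a) b - I) / u) by (field; lra).
  unfold Rdiv. rewrite Rabs_mult, Rabs_inv, (Rabs_pos_eq u) by lra.
  apply Rmult_lt_reg_r with u; auto. rewrite Rmult_assoc, Rinv_l by lra. lra.
Qed.

Lemma atan_le_id y : 0 <= y -> atan y <= y.
Proof.
  intros Hy. destruct (Req_dec y 0) as [->|Hn]; [rewrite atan_0; lra|].
  destruct (MVT_gen atan 0 y (fun x => /(1 + x^2))) as [c [Hc E]].
  - intros. apply is_derive_Reals, derivable_pt_lim_atan.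
  - intros. apply (is_derive_continuity_pt _ _ (/(1 + x^2))).
    apply is_derive_Reals, derivable_pt_lim_atan.
  - rewrite atan_0 in E. assert (0 < /(1 + c^2) <= 1).
    { split; [apply Rinv_0_lt_compat; nra|]. rewrite <- Rinv_1. apply Rinv_le_contravar; nra. }
    nra.
Qed.

Lemma atan_tends_PI2 eps : 0 < eps -> exists A, forall x, A <= x -> Rabs (atan x - PI/2) < eps.
Proof.
  intros He. exists (2/eps). intros x Hx.
  assert (0 < x) by (apply Rlt_le_trans with (2/eps); auto; apply Rdiv_lt_0_compat; lra).
  assert (0 < /x) by now apply Rinv_0_lt_compat.
  assert (Ea : atan x = PI/2 - atan (/x)) by (rewrite atan_inv by auto; ring).
  rewrite Ea.
  assert (atan (/x) <= /x) by (apply atan_le_id; lra).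
  assert (0 < atan (/x)) by (rewrite <- atan_0; now apply atan_increasing).
  assert (/x <= eps/2).
  { replace (eps/2) with (/(2/eps)) by (field; lra).
    apply Rinv_le_contravar; auto. apply Rdiv_lt_0_compat; lra. }
  apply Rabs_def1; lra.
Qed.

Lemma atan_opp_tends_PI2 eps : 0 < eps ->
  exists A, forall x, A <= x -> Rabs (atan (-x) - -(PI/2)) < eps.
Proof.
  intros He. destruct (atan_tends_PI2 eps He) as [A H]. exists A. intros x Hx.
  rewrite atan_opp. replace (- atan x - - (PI/2)) with (-(atan x - PI/2)) by ring.
  rewrite Rabs_Ropp. auto.
Qed.

Lemma is_derive_atan_sqr x : is_derive atan x (/(1 + x * x)).
Proof.
  apply is_derive_Reals. replace (x * x) with (x ^ 2) by ring. apply derivable_pt_lim_atan.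
Qed.

Lemma continuous_lorentz x : continuous (fun t => /(1 + t * t)) x.
Proof. apply (ex_derive_continuous (fun t => /(1 + t * t))). auto_derive. nra. Qed.

Lemma is_RInt_improper_lorentz : is_RInt_improper (fun t => /(1 + t * t)) PI.
Proof.
  replace PI with (PI/2 - -(PI/2)) by field.
  apply (is_RInt_improper_derive atan).
  - apply is_derive_atan_sqr.
  - apply continuous_lorentz.
  - apply atan_tends_PI2.
  - apply atan_opp_tends_PI2.
Qed.

Lemma RInt_lorentz a b : RInt (fun t => /(1 + t * t)) a b = atan b - atan a.
Proof.
  apply is_RInt_unique, (is_RInt_derive atan).
  - intros; apply is_derive_atan_sqr.
  - intros; apply continuous_lorentz.
Qed.

(* A monotone limit: for [h >= 0] the integrals over [-a, b] increase with [a] and [b]. *)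
Lemma ex_RInt_improper_nonneg h M : (forall z, continuous h z) -> (forall x, 0 <= h x) ->
  (forall a, 0 <= a -> RInt h (-a) a <= M) -> exists I, is_RInt_improper h I.
Proof.
  intros Hc Hp HM.
  set (E := fun y => exists a, 0 <= a /\ y = RInt h (-a) a).
  destruct (completeness E) as [L [HL1 HL2]].
  { exists M. intros y [a [Ha ->]]. auto. }
  { exists (RInt h (-0) 0). exists 0. split; auto; lra. }
  exists L. intros eps Heps.
  assert (exists a0, 0 <= a0 /\ L - eps < RInt h (-a0) a0) as [a0 [Ha0 Hl]].
  { apply NNPP. intros Hn. assert (L <= L - eps); [|lra].
    apply HL2. intros y [a [Ha ->]]. apply Rnot_lt_le. intros Hlt. apply Hn. now exists a. }
  exists a0. intros a b Ha Hb. split; [now apply ex_RInt_continuous_R|].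
  assert (Hup : RInt h (-a) b <= L).
  { set (m := Rmax a b). pose proof (Rmax_l a b). pose proof (Rmax_r a b).
    assert (Hm : RInt h (-m) m <= L) by (apply HL1; exists m; split; auto; unfold m; lra).
    rewrite <- (RInt_Chasles_continuous h (-m) b m), <- (RInt_Chasles_continuous h (-m) (-a) b) in Hm by auto.
    assert (0 <= RInt h (-m) (-a)) by (apply RInt_ge_0_continuous; auto; unfold m; lra).
    assert (0 <= RInt h b m) by (apply RInt_ge_0_continuous; auto).
    lra. }
  assert (Hlo : RInt h (-a0) a0 <= RInt h (-a) b).
  { rewrite <- (RInt_Chasles_continuous h (-a) (-a0) b), <- (RInt_Chasles_continuous h (-a0) a0 b) by auto.
    assert (0 <= RInt h (-a) (-a0)) by (apply RInt_ge_0_continuous; auto; lra).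
    assert (0 <= RInt h a0 b) by (apply RInt_ge_0_continuous; auto).
    lra. }
  apply Rabs_def1; lra.
Qed.

(* Apply the monotone case to [g + 2 k], where [k = C / (1 + x^2)] dominates [|g|]. *)
Lemma ex_RInt_improper_dominated g C : (forall z, continuous g z) ->
  (forall x, Rabs (g x) <= C / (1 + x * x)) -> exists I, is_RInt_improper g I.
Proof.
  intros Hc Hb.
  assert (HC : 0 <= C).
  { specialize (Hb 0). pose proof (Rabs_pos (g 0)).
    replace (C / (1 + 0 * 0)) with C in Hb by field. lra. }
  set (k := fun x => C * /(1 + x * x)).
  assert (Hkc : forall z, continuous k z).
  { intros z. apply (ex_derive_continuous (fun t => C * /(1 + t * t))). auto_derive. nra. }
  assert (Hgk : forall x, - k x <= g x <= k x).
  { intros x. apply Rabs_le_between. apply Hb. }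
  assert (Hgk2c : forall z, continuous (fun x => g x + 2 * k x) z).
  { intros z. apply (continuous_plus g (fun x => 2 * k x)); auto.
    apply (continuous_scal_r 2 k); auto. }
  destruct (ex_RInt_improper_nonneg (fun x => g x + 2 * k x) (3 * C * PI)) as [I HI]; auto.
  - intros x. specialize (Hgk x). lra.
  - intros a Ha. pose proof PI_RGT_0.
    assert (RInt g (-a) a <= RInt k (-a) a).
    { apply RInt_le; try lra; try (now apply ex_RInt_continuous_R). intros x _. apply Hgk. }
    assert (Hk : RInt k (-a) a = C * (atan a - atan (-a))).
    { unfold k. rewrite RInt_scal_R, RInt_lorentz; auto.
      apply ex_RInt_continuous_R, continuous_lorentz. }
    rewrite RInt_plus_R, RInt_scal_R by (apply ex_RInt_continuous_R; auto;
      intros; now apply (continuous_scal_r 2 k)).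
    pose proof (atan_bound a). pose proof (atan_bound (-a)).
    assert (C * (atan a - atan (-a)) <= C * PI) by (apply Rmult_le_compat_l; lra).
    lra.
  - exists (I + -2 * (C * PI)).
    apply (is_RInt_improper_ext (fun x => (g x + 2 * k x) + -2 * k x) g (I + -2 * (C * PI)));
      [intros; ring | reflexivity |].
    apply is_RInt_improper_plus; auto.
    apply is_RInt_improper_scal, is_RInt_improper_scal, is_RInt_improper_lorentz.
Qed.

(** * The Gaussian integral *)

Definition gauss (x : R) : R := exp (-(x * x)).
Definition gauss_partial (x : R) : R := RInt gauss 0 x.
Definition feynman_kernel (x t : R) : R := exp (-(x * x) * (1 + t * t)) / (1 + t * t).
Definition feynman (x : R) : R := RInt (feynman_kernel x) 0 1.

Lemma continuous_gauss t : continuous gauss t.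
Proof. apply (ex_derive_continuous (fun t => exp (-(t * t)))). auto_derive. auto. Qed.

Lemma continuous_feynman_kernel x t : continuous (feynman_kernel x) t.
Proof.
  apply (ex_derive_continuous (fun t => exp (-(x * x) * (1 + t * t)) / (1 + t * t))).
  auto_derive. nra.
Qed.

Lemma is_derive_feynman_kernel x t :
  is_derive (fun z => feynman_kernel z t) x (-2 * x * exp (-(x * x) * (1 + t * t))).
Proof. unfold feynman_kernel. auto_derive; [nra | field; nra]. Qed.

Lemma is_derive_feynman x : is_derive feynman x (RInt (fun t => -2 * x * exp (-(x * x) * (1 + t * t))) 0 1).
Proof.
  assert (Hd : forall u v, Derive (fun z => feynman_kernel z v) u = -2 * u * exp (-(u * u) * (1 + v * v)))
    by (intros; apply is_derive_unique, is_derive_feynman_kernel).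
  rewrite <- (RInt_ext (fun t => Derive (fun u => feynman_kernel u t) x)) by auto.
  apply (is_derive_RInt_param feynman_kernel 0 1 x).
  - apply filter_forall. intros y t _. eexists. apply is_derive_feynman_kernel.
  - intros t _. apply continuity_2d_pt_ext with (f := fun u v => -2 * u * exp (-(u * u) * (1 + v * v))).
    { intros; now rewrite Hd. }
    apply continuity_2d_pt_mult.
    + apply continuity_2d_pt_mult; [apply continuity_2d_pt_const | apply continuity_2d_pt_id1].
    + apply continuity_1d_2d_pt_comp; [apply derivable_continuous_pt, derivable_pt_exp|].
      apply continuity_2d_pt_mult.
      * apply continuity_2d_pt_opp, continuity_2d_pt_mult; apply continuity_2d_pt_id1.
      * apply continuity_2d_pt_plus; [apply continuity_2d_pt_const|].
        apply continuity_2d_pt_mult; apply continuity_2d_pt_id2.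
  - apply filter_forall. intros y. apply ex_RInt_continuous_R, continuous_feynman_kernel.
Qed.

Lemma is_derive_gauss_partial x : is_derive gauss_partial x (gauss x).
Proof.
  apply (is_derive_RInt gauss gauss_partial 0).
  - apply filter_forall. intros b. apply (@RInt_correct R_CompleteNormedModule).
    apply ex_RInt_continuous_R, continuous_gauss.
  - apply continuous_gauss.
Qed.

Lemma gauss_partial_scale x : gauss_partial x = x * RInt (fun t => exp (-(x * x) * (t * t))) 0 1.
Proof.
  unfold gauss_partial.
  assert (E := RInt_comp_lin gauss x 0 0 1).
  replace (x * 0 + 0) with 0 in E by ring. replace (x * 1 + 0) with x in E by ring.
  rewrite <- E by apply ex_RInt_continuous_R, continuous_gauss.
  rewrite RInt_scal.
  2:{ apply ex_RInt_continuous_R. intros.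
      apply (ex_derive_continuous (fun y => gauss (x * y + 0))). unfold gauss; auto_derive; auto. }
  unfold scal; simpl; unfold mult; simpl. f_equal. apply RInt_ext. intros; unfold gauss. f_equal. ring.
Qed.

(* Feynman's trick: the derivative of [feynman x + gauss_partial x ^ 2] vanishes. *)
Lemma gauss_partial_sqr x : gauss_partial x * gauss_partial x = PI/4 - feynman x.
Proof.
  set (h := fun x => feynman x + gauss_partial x * gauss_partial x).
  assert (Hh : forall x, is_derive h x 0).
  { intros y. unfold h.
    replace 0 with (RInt (fun t => -2 * y * exp (-(y * y) * (1 + t * t))) 0 1
                    + (gauss y * gauss_partial y + gauss_partial y * gauss y)).
    { apply is_derive_Reals, derivable_pt_lim_plus; [apply is_derive_Reals, is_derive_feynman|].
      apply derivable_pt_lim_mult; apply is_derive_Reals, is_derive_gauss_partial. }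
    rewrite gauss_partial_scale.
    rewrite (RInt_ext _ (fun t => (-2 * y * exp (-(y * y))) * exp (-(y * y) * (t * t)))).
    2:{ intros t _. replace (-(y * y) * (1 + t * t)) with (-(y * y) + -(y * y) * (t * t)) by ring.
        rewrite exp_plus. simpl. ring. }
    rewrite RInt_scal_R; [unfold gauss; ring|].
    apply ex_RInt_continuous_R. intros.
    apply (ex_derive_continuous (fun t => exp (-(y * y) * (t * t)))). auto_derive; auto. }
  assert (Hh0 : h 0 = PI/4).
  { unfold h, gauss_partial, feynman. rewrite RInt_point. unfold zero; simpl.
    rewrite Rmult_0_l, Rplus_0_r.
    replace (PI/4) with (atan 1 - atan 0) by (rewrite atan_0, atan_1; ring).
    rewrite <- RInt_lorentz.
    apply RInt_ext. intros t _. unfold feynman_kernel.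
    replace (-(0 * 0) * (1 + t * t)) with 0 by ring. rewrite exp_0. unfold Rdiv. apply Rmult_1_l. }
  destruct (MVT_gen h 0 x (fun _ => 0)) as [c [_ Hc]].
  - intros; apply Hh.
  - intros. apply (is_derive_continuity_pt _ _ 0), Hh.
  - unfold h in Hc, Hh0. lra.
Qed.

Lemma feynman_bounds x : 0 <= feynman x <= exp (-(x * x)).
Proof.
  unfold feynman. split.
  - apply RInt_ge_0_continuous; [lra | apply continuous_feynman_kernel|].
    intros t. unfold feynman_kernel. apply Rlt_le, Rdiv_lt_0_compat; [apply exp_pos | nra].
  - replace (exp (-(x * x))) with (RInt (fun _ => exp (-(x * x))) 0 1)
      by (rewrite RInt_const; unfold scal; simpl; unfold mult; simpl; ring).
    apply RInt_le; [lra | apply ex_RInt_continuous_R, continuous_feynman_kernel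
                   | apply ex_RInt_continuous_R; intros; apply continuous_const |].
    intros t _. unfold feynman_kernel. assert (1 <= 1 + t * t) by nra.
    assert (exp (-(x * x) * (1 + t * t)) <= exp (-(x * x))) by (apply exp_le_compat; nra).
    pose proof (exp_pos (-(x * x) * (1 + t * t))).
    unfold Rdiv. apply Rle_trans with (exp (-(x * x) * (1 + t * t)) * 1); [|lra].
    apply Rmult_le_compat_l; [lra|]. rewrite <- Rinv_1. apply Rinv_le_contravar; lra.
Qed.

(* From [S^2 = PI/4 - F] and [0 <= F <= exp(-x^2) <= 1/x]: [|S - sqrt PI/2| (S + sqrt PI/2) = F]. *)
Lemma gauss_partial_tends eps : 0 < eps ->
  exists A, forall x, A <= x -> Rabs (gauss_partial x - sqrt PI / 2) < eps.
Proof.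
  intros He. set (s0 := sqrt PI / 2).
  assert (Hs0 : 0 < s0) by (unfold s0; pose proof (sqrt_lt_R0 _ PI_RGT_0); lra).
  assert (Hs2 : s0 * s0 = PI/4).
  { unfold s0. replace (sqrt PI / 2 * (sqrt PI / 2)) with (sqrt PI * sqrt PI / 4) by field.
    rewrite sqrt_sqrt; [auto | pose proof PI_RGT_0; lra]. }
  exists (1 + /(eps * s0)). intros x Hx.
  assert (Hp : 0 < /(eps * s0)) by (apply Rinv_0_lt_compat; nra).
  assert (0 < x) by lra.
  assert (0 <= gauss_partial x).
  { apply RInt_ge_0_continuous; [lra | apply continuous_gauss | intros; apply Rlt_le, exp_pos]. }
  pose proof (gauss_partial_sqr x). pose proof (feynman_bounds x).
  assert (exp (-(x * x)) <= /(1 + x * x)).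
  { rewrite exp_Ropp. apply Rinv_le_contravar; [nra | apply exp_ineq1_le]. }
  assert (/(1 + x * x) <= /x) by (apply Rinv_le_contravar; nra).
  assert (/x < eps * s0).
  { rewrite <- (Rinv_inv (eps * s0)). apply Rinv_lt_contravar; nra. }
  assert (Rabs (gauss_partial x - s0) * (gauss_partial x + s0) = feynman x).
  { rewrite <- (Rabs_pos_eq (gauss_partial x + s0)), <- Rabs_mult by lra.
    replace ((gauss_partial x - s0) * (gauss_partial x + s0))
      with (gauss_partial x * gauss_partial x - s0 * s0) by ring.
    rewrite Rabs_left1; lra. }
  pose proof (Rabs_pos (gauss_partial x - s0)).
  apply Rnot_le_lt. intros Hn.
  assert (eps * s0 <= Rabs (gauss_partial x - s0) * (gauss_partial x + s0))
    by (apply Rmult_le_compat; lra).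
  lra.
Qed.

Lemma RInt_gauss_opp a : RInt gauss (-a) 0 = gauss_partial a.
Proof.
  unfold gauss_partial.
  assert (E := RInt_comp_lin gauss (-1) 0 0 a).
  replace (-1 * 0 + 0) with 0 in E by ring. replace (-1 * a + 0) with (-a) in E by ring.
  rewrite <- (opp_RInt_swap (V:=R_CompleteNormedModule) gauss) by apply ex_RInt_continuous_R, continuous_gauss.
  rewrite <- E by apply ex_RInt_continuous_R, continuous_gauss.
  rewrite (RInt_ext _ (fun y => -1 * gauss y)).
  2:{ intros. unfold scal, gauss; simpl; unfold mult; simpl. do 2 f_equal. ring. }
  rewrite RInt_scal_R by apply ex_RInt_continuous_R, continuous_gauss.
  unfold opp; simpl. ring.
Qed.

Lemma is_RInt_improper_gauss : is_RInt_improper gauss (sqrt PI).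
Proof.
  intros eps He. destruct (gauss_partial_tends (eps/2)) as [A HA]; [lra|].
  exists A. intros a b Ha Hb. split; [apply ex_RInt_continuous_R, continuous_gauss|].
  rewrite <- (RInt_Chasles_continuous gauss (-a) 0 b) by apply continuous_gauss.
  rewrite RInt_gauss_opp. fold (gauss_partial b).
  assert (H := HA b Hb). specialize (HA a Ha).
  apply Rabs_def2 in HA. apply Rabs_def2 in H. apply Rabs_def1; lra.
Qed.

(** * One-dimensional normal moments *)

Lemma is_RInt_improper_gauss_shift c a : 0 < c ->
  is_RInt_improper (fun t => exp (-(c * ((t - a) * (t - a))))) (sqrt PI / sqrt c).
Proof.
  intros Hc. assert (Hs : 0 < sqrt c) by now apply sqrt_lt_R0.
  refine (is_RInt_improper_ext _ _ _ _ _ eq_refl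
    (is_RInt_improper_comp_lin gauss _ (sqrt c) (- sqrt c * a) Hs continuous_gauss is_RInt_improper_gauss)).
  intros t. unfold gauss. f_equal.
  replace (sqrt c * t + - sqrt c * a) with (sqrt c * (t - a)) by ring.
  replace (sqrt c * (t - a) * (sqrt c * (t - a))) with ((sqrt c * sqrt c) * ((t - a) * (t - a))) by ring.
  rewrite sqrt_sqrt; lra.
Qed.

Definition normal_kernel (mu sigma x : R) : R := exp (- ((x - mu) * (x - mu)) / (2 * sigma ^ 2)).
Definition normal_pdf (mu sigma x : R) : R := normal_kernel mu sigma x / sqrt (2 * PI * sigma ^ 2).

Lemma normal_const_pos sigma : 0 < sigma -> 0 < sqrt (2 * PI * sigma ^ 2).
Proof. intros. apply sqrt_lt_R0. pose proof PI_RGT_0. apply Rmult_lt_0_compat; [lra | apply pow_lt; lra]. Qed.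

Lemma is_derive_normal_kernel mu sigma x : 0 < sigma ->
  is_derive (normal_kernel mu sigma) x (-(x - mu) / sigma ^ 2 * normal_kernel mu sigma x).
Proof. intros. unfold normal_kernel. auto_derive; [nra|]. unfold Rminus, Rdiv; simpl. field. lra. Qed.

Lemma continuous_normal_kernel mu sigma x : 0 < sigma -> continuous (normal_kernel mu sigma) x.
Proof.
  intros. apply (ex_derive_continuous (normal_kernel mu sigma)).
  eexists. now apply is_derive_normal_kernel.
Qed.

Lemma is_RInt_improper_normal_kernel mu sigma : 0 < sigma ->
  is_RInt_improper (normal_kernel mu sigma) (sqrt (2 * PI * sigma ^ 2)).
Proof.
  intros Hs. set (c := /(2 * sigma ^ 2)).
  assert (Hc : 0 < c) by (apply Rinv_0_lt_compat; nra).
  refine (is_RInt_improper_ext _ _ _ _ _ _ (is_RInt_improper_gauss_shift c mu Hc)).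
  - intros x. unfold normal_kernel, c. f_equal. field. nra.
  - unfold c, Rdiv. pose proof PI_RGT_0.
    rewrite sqrt_inv, Rinv_inv, <- sqrt_mult_alt by lra. f_equal. ring.
Qed.

Lemma sqr_abs_mul_exp_bounded k : 0 < k ->
  exists C, 0 <= C /\ forall z, (1 + Rabs z) * (1 + Rabs z) * exp (-(k * (z * z))) <= C.
Proof.
  intros Hk. assert (0 < /k) by now apply Rinv_0_lt_compat.
  exists (2 * (1 + /k)). split; [lra|]. intros z.
  pose proof (exp_ineq1_le (k * (z * z))). pose proof (exp_pos (k * (z * z))).
  assert ((1 + Rabs z) * (1 + Rabs z) <= 2 + 2 * (z * z)).
  { pose proof (Rabs_pos z). rewrite <- (Rabs_pos_eq (z * z)), Rabs_mult by nra.
    pose proof (Rle_0_sqr (Rabs z - 1)). unfold Rsqr in *. nra. }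
  rewrite exp_Ropp.
  apply Rle_trans with ((2 + 2 * (z * z)) * / exp (k * (z * z))).
  { apply Rmult_le_compat_r; [left; now apply Rinv_0_lt_compat | auto]. }
  apply Rmult_le_reg_r with (exp (k * (z * z))); auto. rewrite Rmult_assoc, Rinv_l by lra.
  assert (z * z = /k * (k * (z * z))) by (field; lra).
  assert (0 <= z * z) by nra.
  nra.
Qed.

Lemma tends_0_of_decay F C mu : 0 <= C -> (forall x, Rabs (F x) <= C / (1 + Rabs (x - mu))) ->
  (forall eps, 0 < eps -> exists A, forall x, A <= x -> Rabs (F x - 0) < eps) /\
  (forall eps, 0 < eps -> exists A, forall x, A <= x -> Rabs (F (-x) - 0) < eps).
Proof.
  intros HC HF.
  assert (K : forall eps, 0 < eps -> forall y, C/eps <= Rabs y -> C/(1 + Rabs y) < eps).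
  { intros eps He y Hy. apply Rmult_le_compat_r with (r := eps) in Hy; [|lra].
    replace (C/eps*eps) with C in Hy by (field; lra).
    pose proof (Rabs_pos y). apply Rmult_lt_reg_r with (1 + Rabs y); [lra|].
    unfold Rdiv. rewrite Rmult_assoc, Rinv_l by lra. nra. }
  split; intros eps He; exists (Rabs mu + C/eps); intros x Hx; rewrite Rminus_0_r;
    (eapply Rle_lt_trans; [apply HF | apply K; auto]).
  - pose proof (Rabs_triang_inv x mu). pose proof (Rle_abs x). lra.
  - replace (-x - mu) with (-(x + mu)) by ring. rewrite Rabs_Ropp.
    pose proof (Rabs_triang_inv x (-mu)). rewrite Rabs_Ropp in H.
    replace (x - - mu) with (x + mu) in H by ring. pose proof (Rle_abs x). lra.
Qed.

Lemma normal_kernel_decay mu sigma : 0 < sigma -> exists C, 0 <= C /\ forall x,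
  Rabs (normal_kernel mu sigma x) <= C / (1 + Rabs (x - mu)) /\
  Rabs ((x - mu) * normal_kernel mu sigma x) <= C / (1 + Rabs (x - mu)).
Proof.
  intros Hs. destruct (sqr_abs_mul_exp_bounded (/(2 * sigma ^ 2))) as [C [HC H]].
  { apply Rinv_0_lt_compat; nra. }
  exists C. split; auto. intros x. specialize (H (x - mu)).
  replace (normal_kernel mu sigma x) with (exp (-(/(2 * sigma ^ 2) * ((x - mu) * (x - mu)))))
    by (unfold normal_kernel; f_equal; field; nra).
  pose proof (exp_pos (-(/(2 * sigma ^ 2) * ((x - mu) * (x - mu))))).
  set (E := exp (-(/(2 * sigma ^ 2) * ((x - mu) * (x - mu))))) in *.
  pose proof (Rabs_pos (x - mu)).
  split; apply Rmult_le_reg_r with (1 + Rabs (x - mu)); try lra;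
    unfold Rdiv; rewrite Rmult_assoc, Rinv_l, Rmult_1_r by lra.
  - rewrite Rabs_pos_eq by lra. nra.
  - rewrite Rabs_mult, (Rabs_pos_eq E) by lra. nra.
Qed.

(* Both centred moments by parts: the primitives are [-sigma^2 k] and [-sigma^2 (x - mu) k]. *)
Lemma is_RInt_improper_normal_kernel_m1 mu sigma : 0 < sigma ->
  is_RInt_improper (fun x => (x - mu) * normal_kernel mu sigma x) 0.
Proof.
  intros Hs. destruct (normal_kernel_decay mu sigma Hs) as [C [HC HD]].
  destruct (tends_0_of_decay (fun x => -(sigma ^ 2) * normal_kernel mu sigma x) (sigma ^ 2 * C) mu)
    as [L1 L2]; [nra| |].
  { intros x. rewrite Rabs_mult, Rabs_Ropp, Rabs_pos_eq by nra. unfold Rdiv. rewrite Rmult_assoc.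
    apply Rmult_le_compat_l; [nra | apply HD]. }
  replace 0 with (0 - 0) by ring.
  apply (is_RInt_improper_derive (fun x => -(sigma ^ 2) * normal_kernel mu sigma x)); auto.
  - intros x. replace ((x - mu) * normal_kernel mu sigma x)
      with (-(sigma ^ 2) * (-(x - mu) / sigma ^ 2 * normal_kernel mu sigma x)) by (field; lra).
    now apply is_derive_scal, is_derive_normal_kernel.
  - intros z. apply (continuous_mult (fun x => x - mu)); [|now apply continuous_normal_kernel].
    apply (ex_derive_continuous (fun x => x - mu)). auto_derive. auto.
Qed.

Lemma is_RInt_improper_normal_kernel_m2 mu sigma : 0 < sigma ->
  is_RInt_improper (fun x => (x - mu) * (x - mu) * normal_kernel mu sigma x)
    (sigma ^ 2 * sqrt (2 * PI * sigma ^ 2)).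
Proof.
  intros Hs. destruct (normal_kernel_decay mu sigma Hs) as [C [HC HD]].
  destruct (tends_0_of_decay (fun x => -(sigma ^ 2) * ((x - mu) * normal_kernel mu sigma x)) (sigma ^ 2 * C) mu)
    as [L1 L2]; [nra| |].
  { intros x. rewrite Rabs_mult, Rabs_Ropp, (Rabs_pos_eq (sigma ^ 2)) by nra. unfold Rdiv. rewrite Rmult_assoc.
    apply Rmult_le_compat_l; [nra | apply HD]. }
  assert (Hparts : is_RInt_improper
            (fun x => -(sigma ^ 2) * normal_kernel mu sigma x + (x - mu) * (x - mu) * normal_kernel mu sigma x)
            (0 - 0)).
  { apply (is_RInt_improper_derive (fun x => -(sigma ^ 2) * ((x - mu) * normal_kernel mu sigma x))); auto.
    - intros x. unfold normal_kernel. auto_derive; [nra|]. unfold Rminus, Rdiv; simpl. field. lra.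
    - intros z. apply (ex_derive_continuous
        (fun x => -(sigma ^ 2) * normal_kernel mu sigma x + (x - mu) * (x - mu) * normal_kernel mu sigma x)).
      unfold normal_kernel. auto_derive. nra. }
  refine (is_RInt_improper_ext _ _ _ _ _ _ (is_RInt_improper_plus _ _ _ _ Hparts
            (is_RInt_improper_scal _ (sigma ^ 2) _ (is_RInt_improper_normal_kernel mu sigma Hs)))).
  - intros; ring.
  - ring.
Qed.

Lemma is_RInt_improper_normal_pdf mu sigma : 0 < sigma -> is_RInt_improper (normal_pdf mu sigma) 1.
Proof.
  intros Hs. pose proof (normal_const_pos sigma Hs).
  refine (is_RInt_improper_ext _ _ _ _ _ _
    (is_RInt_improper_scal _ (/sqrt (2 * PI * sigma ^ 2)) _ (is_RInt_improper_normal_kernel mu sigma Hs))).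
  - intros; unfold normal_pdf; field; lra.
  - field; lra.
Qed.

Lemma is_RInt_improper_normal_pdf_m1 mu sigma : 0 < sigma ->
  is_RInt_improper (fun x => x * normal_pdf mu sigma x) mu.
Proof.
  intros Hs. pose proof (normal_const_pos sigma Hs).
  refine (is_RInt_improper_ext _ _ _ _ _ _ (is_RInt_improper_plus _ _ _ _
    (is_RInt_improper_scal _ (/sqrt (2 * PI * sigma ^ 2)) _ (is_RInt_improper_normal_kernel_m1 mu sigma Hs))
    (is_RInt_improper_scal _ mu _ (is_RInt_improper_normal_pdf mu sigma Hs)))).
  - intros; unfold normal_pdf; field; lra.
  - ring.
Qed.

Lemma is_RInt_improper_normal_pdf_m2 mu sigma : 0 < sigma ->
  is_RInt_improper (fun x => x * x * normal_pdf mu sigma x) (mu * mu + sigma ^ 2).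
Proof.
  intros Hs. pose proof (normal_const_pos sigma Hs).
  refine (is_RInt_improper_ext _ _ _ _ _ _ (is_RInt_improper_plus _ _ _ _
    (is_RInt_improper_scal _ (/sqrt (2 * PI * sigma ^ 2)) _ (is_RInt_improper_normal_kernel_m2 mu sigma Hs))
    (is_RInt_improper_plus _ _ _ _
      (is_RInt_improper_scal _ (2 * mu) _ (is_RInt_improper_normal_pdf_m1 mu sigma Hs))
      (is_RInt_improper_scal _ (-(mu * mu)) _ (is_RInt_improper_normal_pdf mu sigma Hs))))).
  - intros; unfold normal_pdf; field; lra.
  - field; lra.
Qed.

(** * Vectors and iterated integrals *)

Definition vtail (u : nat -> R) : nat -> R := fun i => u (S i).
Definition vupdate (y : nat -> R) (j : nat) (s : R) : nat -> R :=
  fun i => if Nat.eqb i j then s else y i.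
Definition vsub (y mu : nat -> R) : nat -> R := fun i => y i - mu i.

Lemma dot_S_tail k u v : dot (S k) u v = u 0%nat * v 0%nat + dot k (vtail u) (vtail v).
Proof.
  induction k; [simpl; ring|].
  change (dot (S (S k)) u v) with (dot (S k) u v + u (S k) * v (S k)).
  rewrite IHk. simpl. unfold vtail. ring.
Qed.

Lemma dot_cons k a u b v : dot (S k) (cons_vec a u) (cons_vec b v) = a * b + dot k u v.
Proof. now rewrite dot_S_tail. Qed.

Lemma dot_ext n u u' v v' : (forall i, (i < n)%nat -> u i = u' i /\ v i = v' i) ->
  dot n u v = dot n u' v'.
Proof.
  induction n; intros H; [reflexivity|]. simpl. rewrite IHn by (intros; apply H; lia).
  destruct (H n) as [-> ->]; auto.
Qed.

Lemma dot_nonneg n u : 0 <= dot n u u.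
Proof. induction n; simpl; nra. Qed.

Lemma dot_coord_sqr_le n u i : (i < n)%nat -> u i * u i <= dot n u u.
Proof.
  induction n; intros H; [lia|]. simpl. destruct (Nat.eq_dec i n).
  - subst. pose proof (dot_nonneg n u). lra.
  - assert (i < n)%nat by lia. specialize (IHn H0). nra.
Qed.

Lemma dot_scal_r n m v c : dot n m (fun i => v i * c) = dot n m v * c.
Proof. induction n; simpl; [ring|]. rewrite IHn; ring. Qed.

Lemma dot_opp_r n m v : dot n m (fun i => - v i) = - dot n m v.
Proof. induction n; simpl; [ring|]. rewrite IHn; ring. Qed.

Lemma dot_add_scal_sqr n u v l : dot n (fun i => u i + l * v i) (fun i => u i + l * v i) =
  dot n u u + 2 * l * dot n u v + l * l * dot n v v.
Proof. induction n; simpl; [ring|]. rewrite IHn; ring. Qed.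

(* Nonnegativity of the quadratic [l |-> |u + l v|^2], at its minimiser when [|v| > 0]. *)
Lemma dot_Cauchy_Schwarz n u v : dot n u v * dot n u v <= dot n u u * dot n v v.
Proof.
  assert (Hq : forall l, 0 <= dot n u u + 2 * l * dot n u v + l * l * dot n v v)
    by (intros l; rewrite <- dot_add_scal_sqr; apply dot_nonneg).
  destruct (dot_nonneg n v) as [Hv|Hv].
  - specialize (Hq (- (dot n u v / dot n v v))).
    apply Rmult_le_reg_r with (/ dot n v v); [now apply Rinv_0_lt_compat|].
    replace (dot n u u * dot n v v * / dot n v v) with (dot n u u) by (field; lra).
    replace (dot n u u + 2 * - (dot n u v / dot n v v) * dot n u v
             + - (dot n u v / dot n v v) * - (dot n u v / dot n v v) * dot n v v)
      with (dot n u u - dot n u v * dot n u v * / dot n v v) in Hq by (field; lra).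
    lra.
  - rewrite <- Hv in Hq |- *. destruct (Req_dec (dot n u v) 0) as [E|E]; [rewrite E; lra|].
    specialize (Hq (- (dot n u u + 1) / (2 * dot n u v))).
    replace (2 * (- (dot n u u + 1) / (2 * dot n u v)) * dot n u v) with (-(dot n u u + 1)) in Hq
      by (field; auto).
    lra.
Qed.

Lemma vupdate_cons0 t y s : vupdate (cons_vec t y) 0 s = cons_vec s y.
Proof. apply functional_extensionality. now intros [|i]. Qed.

Lemma vupdate_consS t y j s : vupdate (cons_vec t y) (S j) s = cons_vec t (vupdate y j s).
Proof. apply functional_extensionality. now intros [|i]. Qed.

Lemma vupdate_eq y j s : vupdate y j s j = s.
Proof. unfold vupdate. now rewrite Nat.eqb_refl. Qed.

Lemma vupdate_neq y j s i : i <> j -> vupdate y j s i = y i.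
Proof. intros H. unfold vupdate. apply Nat.eqb_neq in H. now rewrite H. Qed.

Lemma vsub_vupdate y mu j s : vsub (vupdate y j s) mu = vupdate (vsub y mu) j (s - mu j).
Proof.
  apply functional_extensionality. intros i. unfold vsub, vupdate.
  destruct (Nat.eqb_spec i j); subst; auto.
Qed.

Lemma vsub_cons t y mu : vsub (cons_vec t y) mu = cons_vec (t - mu 0%nat) (vsub y (vtail mu)).
Proof. apply functional_extensionality. now intros [|i]. Qed.

Lemma dot_vupdate_self n u j s : (j < n)%nat ->
  dot n (vupdate u j s) (vupdate u j s) = dot n u u - u j * u j + s * s.
Proof.
  induction n; intros H; [lia|]. simpl. destruct (Nat.eq_dec j n).
  - subst. rewrite vupdate_eq, (dot_ext n (vupdate u n s) u (vupdate u n s) u); [ring|].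
    intros i Hi. rewrite vupdate_neq by lia. auto.
  - rewrite IHn, vupdate_neq by lia. ring.
Qed.

Lemma dot_vupdate_r n m y j s : (j < n)%nat -> dot n m (vupdate y j s) = dot n m y + m j * (s - y j).
Proof.
  induction n; intros H; [lia|]. simpl. destruct (Nat.eq_dec j n).
  - subst. rewrite vupdate_eq, (dot_ext n m m (vupdate y n s) y); [ring|].
    intros i Hi. rewrite vupdate_neq by lia. auto.
  - rewrite IHn, vupdate_neq by lia. ring.
Qed.

Lemma is_int_iter_ext n f g I J : (forall y, f y = g y) -> I = J ->
  is_int_iter n f I -> is_int_iter n g J.
Proof.
  intros He <-. revert f g I He. induction n; intros f g I He H; simpl in *.
  - now rewrite H.
  - destruct H as [h [Hin Hout]]. exists h. split; auto.
    intros t. apply (IHn (fun y => f (cons_vec t y))); auto.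
Qed.

Lemma is_int_iter_plus n f g I J : is_int_iter n f I -> is_int_iter n g J ->
  is_int_iter n (fun y => f y + g y) (I + J).
Proof.
  revert f g I J. induction n; intros f g I J Hf Hg; simpl in *; [now subst|].
  destruct Hf as [h1 [Hin1 Hout1]], Hg as [h2 [Hin2 Hout2]].
  exists (fun t => h1 t + h2 t). split.
  - intros t. apply (IHn (fun y => f (cons_vec t y)) (fun y => g (cons_vec t y))); auto.
  - apply is_RInt_improper_equiv, is_RInt_improper_plus; now apply is_RInt_improper_equiv.
Qed.

Lemma is_int_iter_scal n f c I : is_int_iter n f I -> is_int_iter n (fun y => c * f y) (c * I).
Proof.
  revert f I. induction n; intros f I Hf; simpl in *; [now subst|].
  destruct Hf as [h [Hin Hout]]. exists (fun t => c * h t). split.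
  - intros t. apply (IHn (fun y => f (cons_vec t y))); auto.
  - apply is_RInt_improper_equiv, is_RInt_improper_scal; now apply is_RInt_improper_equiv.
Qed.

Lemma is_int_iter_le n f g I J : (forall y, f y <= g y) ->
  is_int_iter n f I -> is_int_iter n g J -> I <= J.
Proof.
  revert f g I J. induction n; intros f g I J Hle Hf Hg; simpl in *; [now subst|].
  destruct Hf as [h1 [Hin1 Hout1]], Hg as [h2 [Hin2 Hout2]].
  apply (is_RInt_improper_le h1 h2); try now apply is_RInt_improper_equiv.
  intros t. apply (IHn (fun y => f (cons_vec t y)) (fun y => g (cons_vec t y))); auto.
Qed.

Lemma is_int_iter_zero n : is_int_iter n (fun _ => 0) 0.
Proof.
  induction n; simpl; auto. exists (fun _ => 0). split; auto.
  apply is_RInt_improper_equiv.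
  refine (is_RInt_improper_ext _ _ _ _ _ _ (is_RInt_improper_scal _ 0 _ is_RInt_improper_lorentz));
    intros; ring.
Qed.

Lemma is_int_iter_abs_le n f g I J : (forall y, Rabs (f y) <= g y) ->
  is_int_iter n f I -> is_int_iter n g J -> Rabs I <= J.
Proof.
  intros H Hf Hg. apply Rabs_le_between.
  assert (Hb : forall y, - g y <= f y <= g y) by (intros y; apply Rabs_le_between, H).
  split.
  - replace (-J) with (-1 * J) by ring.
    apply (is_int_iter_le n (fun y => -1 * g y) f); auto.
    + intros y. specialize (Hb y). lra.
    + now apply is_int_iter_scal.
  - apply (is_int_iter_le n f g); auto. intros y. apply Hb.
Qed.

(** * Existence of iterated integrals of Gaussian-controlled functions *)

Definition gauss_weight (mu : nat -> R) (c : R) (n : nat) (y : nat -> R) : R :=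
  exp (-(c * dot n (vsub y mu) (vsub y mu))).

Lemma gauss_weight_pos mu c n y : 0 < gauss_weight mu c n y.
Proof. apply exp_pos. Qed.

Lemma gauss_weight_cons mu c k t y : gauss_weight mu c (S k) (cons_vec t y) =
  exp (-(c * ((t - mu 0%nat) * (t - mu 0%nat)))) * gauss_weight (vtail mu) c k y.
Proof. unfold gauss_weight. rewrite vsub_cons, dot_cons, <- exp_plus. f_equal. ring. Qed.

Lemma gauss_weight_antimono mu c c' n y : c' <= c -> gauss_weight mu c n y <= gauss_weight mu c' n y.
Proof. intros H. apply exp_le_compat. pose proof (dot_nonneg n (vsub y mu)). nra. Qed.

Lemma ex_int_iter_gauss_weight k : forall mu c, 0 < c -> exists J, is_int_iter k (gauss_weight mu c k) J.
Proof.
  induction k; intros mu c Hc; [now eexists|].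
  destruct (IHk (vtail mu) c Hc) as [J HJ].
  exists (J * (sqrt PI / sqrt c)), (fun t => J * exp (-(c * ((t - mu 0%nat) * (t - mu 0%nat))))). split.
  - intros t. refine (is_int_iter_ext _ _ _ _ _ _ _
      (is_int_iter_scal _ _ (exp (-(c * ((t - mu 0%nat) * (t - mu 0%nat))))) _ HJ)).
    + intros y. rewrite gauss_weight_cons. ring.
    + ring.
  - now apply is_RInt_improper_equiv, is_RInt_improper_scal, is_RInt_improper_gauss_shift.
Qed.

(* Size and coordinatewise local Lipschitz constant both dominated by a Gaussian weight; the
   Lipschitz part is what makes every partial integral a continuous function of the outer variable. *)
Definition gauss_controlled (n : nat) (mu : nat -> R) (c K L : R) (f : (nat -> R) -> R) : Prop :=
  (forall y, Rabs (f y) <= K * gauss_weight mu c n y) /\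
  (forall y j s, (j < n)%nat -> Rabs (s - y j) <= 1 ->
     Rabs (f (vupdate y j s) - f y) <= L * Rabs (s - y j) * gauss_weight mu c n y).

Lemma continuous_of_local_lipschitz (g : R -> R) t M : 0 <= M ->
  (forall t', Rabs (t' - t) <= 1 -> Rabs (g t' - g t) <= M * Rabs (t' - t)) -> continuous g t.
Proof.
  intros HM H. apply continuity_pt_filterlim.
  intros eps He. exists (Rmin 1 (eps / (M + 1))).
  split; [apply Rmin_pos; [lra | apply Rdiv_lt_0_compat; lra]|].
  intros x [_ Hx]. simpl in *. unfold R_dist in *.
  assert (Rabs (x - t) < 1) by (eapply Rlt_le_trans; [exact Hx | apply Rmin_l]).
  assert (Hx2 : Rabs (x - t) < eps / (M + 1)) by (eapply Rlt_le_trans; [exact Hx | apply Rmin_r]).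
  eapply Rle_lt_trans; [apply H; lra|].
  pose proof (Rabs_pos (x - t)).
  apply Rle_lt_trans with ((M + 1) * Rabs (x - t)); [nra|].
  apply Rmult_lt_reg_l with (/(M + 1)); [apply Rinv_0_lt_compat; lra|].
  rewrite <- Rmult_assoc, Rinv_l, Rmult_1_l by lra. unfold Rdiv in Hx2. lra.
Qed.

Lemma gauss_shift_le_lorentz c a : 0 < c -> exists C0, 0 <= C0 /\ forall t,
  exp (-(c * ((t - a) * (t - a)))) <= C0 / (1 + t * t).
Proof.
  intros Hc. assert (0 < 2 / c) by (apply Rdiv_lt_0_compat; lra).
  exists ((1 + 2 * (a * a)) * (1 + 2 / c)). split; [nra|].
  intros t. set (z := t - a).
  rewrite exp_Ropp. pose proof (exp_ineq1_le (c * (z * z))).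
  assert (0 <= z * z) by nra.
  assert (Hk : 1 + t * t <= (1 + 2 * (a * a)) * (1 + 2 / c) * (1 + c * (z * z))).
  { replace (t * t) with ((z + a) * (z + a)) by (unfold z; ring).
    assert ((z + a) * (z + a) <= 2 * (z * z) + 2 * (a * a))
      by (pose proof (Rle_0_sqr (z - a)); unfold Rsqr in *; nra).
    assert (1 + 2 * (z * z) <= (1 + 2 / c) * (1 + c * (z * z))).
    { replace ((1 + 2 / c) * (1 + c * (z * z))) with (1 + 2 / c + c * (z * z) + 2 * (z * z))
        by (field; lra). nra. }
    assert (0 <= a * a) by nra. nra. }
  assert (P1 : 0 < 1 + c * (z * z)) by nra. assert (P2 : 0 < 1 + t * t) by nra.
  apply Rle_trans with (/(1 + c * (z * z))); [apply Rinv_le_contravar; lra|].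
  apply Rmult_le_reg_r with ((1 + c * (z * z)) * (1 + t * t)); [now apply Rmult_lt_0_compat|].
  replace (/ (1 + c * (z * z)) * ((1 + c * (z * z)) * (1 + t * t))) with (1 + t * t) by (field; lra).
  eapply Rle_trans; [exact Hk|]. right. field. lra.
Qed.

Lemma gauss_controlled_nonneg n mu c K L f : gauss_controlled n mu c K L f -> 0 <= K.
Proof.
  intros [Hdom _]. specialize (Hdom (fun _ => 0)).
  pose proof (Rabs_pos (f (fun _ => 0))). pose proof (gauss_weight_pos mu c n (fun _ => 0)). nra.
Qed.

Lemma gauss_controlled_slice n mu c K L f t : gauss_controlled (S n) mu c K L f ->
  let e := exp (-(c * ((t - mu 0%nat) * (t - mu 0%nat)))) in
  gauss_controlled n (vtail mu) c (K * e) (L * e) (fun y => f (cons_vec t y)).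
Proof.
  intros [Hdom Hlip] e. split.
  - intros y. specialize (Hdom (cons_vec t y)). rewrite gauss_weight_cons in Hdom. fold e in Hdom. lra.
  - intros y j s Hj Hs. rewrite <- vupdate_consS.
    specialize (Hlip (cons_vec t y) (S j) s ltac:(lia) Hs). rewrite gauss_weight_cons in Hlip.
    fold e in Hlip. simpl in Hlip. lra.
Qed.

Lemma slice_integral_lipschitz n mu c K L f g J t t' : gauss_controlled (S n) mu c K L f ->
  is_int_iter n (gauss_weight (vtail mu) c n) J ->
  (forall t, is_int_iter n (fun y => f (cons_vec t y)) (g t)) -> Rabs (t' - t) <= 1 ->
  Rabs (g t' - g t) <= L * exp (-(c * ((t - mu 0%nat) * (t - mu 0%nat)))) * J * Rabs (t' - t).
Proof.
  intros [_ Hlip] HJ Hg Ht. set (e := exp (-(c * ((t - mu 0%nat) * (t - mu 0%nat))))).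
  replace (g t' - g t) with (g t' + -1 * g t) by ring.
  replace (L * e * J * Rabs (t' - t)) with ((L * Rabs (t' - t) * e) * J) by ring.
  apply (is_int_iter_abs_le n (fun y => f (cons_vec t' y) + -1 * f (cons_vec t y))
           (fun y => (L * Rabs (t' - t) * e) * gauss_weight (vtail mu) c n y)).
  - intros y. specialize (Hlip (cons_vec t y) 0%nat t' ltac:(lia) Ht).
    rewrite vupdate_cons0, gauss_weight_cons in Hlip. fold e in Hlip. simpl in Hlip.
    replace (f (cons_vec t' y) + -1 * f (cons_vec t y)) with (f (cons_vec t' y) - f (cons_vec t y)) by ring.
    lra.
  - apply is_int_iter_plus; [|apply is_int_iter_scal]; apply Hg.
  - now apply is_int_iter_scal.
Qed.

(* By induction on [n]: the inner integrals [g t] are bounded by [K J e(t)] and Lipschitz near each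
   [t], hence continuous and dominated by [C / (1 + t^2)]. *)
Lemma ex_int_iter_gauss_controlled n : forall mu c K L f, 0 < c ->
  gauss_controlled n mu c K L f -> exists I, is_int_iter n f I.
Proof.
  induction n; intros mu c K L f Hc Hf; [now eexists|].
  set (e := fun t => exp (-(c * ((t - mu 0%nat) * (t - mu 0%nat))))).
  assert (HK := gauss_controlled_nonneg _ _ _ _ _ _ Hf).
  assert (Hsl := fun t => gauss_controlled_slice n mu c K L f t Hf).
  assert (HI : forall t, exists I, is_int_iter n (fun y => f (cons_vec t y)) I)
    by (intros t; exact (IHn _ _ _ _ _ Hc (Hsl t))).
  destruct (choice _ HI) as [g Hg].
  destruct (ex_int_iter_gauss_weight n (vtail mu) c Hc) as [J HJ].
  assert (HJ0 : 0 <= J).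
  { apply (is_int_iter_le n (fun _ => 0) (gauss_weight (vtail mu) c n)); auto.
    - intros; left; apply gauss_weight_pos.
    - apply is_int_iter_zero. }
  assert (Hbd : forall t, Rabs (g t) <= K * J * e t).
  { intros t. replace (K * J * e t) with (K * e t * J) by ring.
    apply (is_int_iter_abs_le n (fun y => f (cons_vec t y)) (fun y => K * e t * gauss_weight (vtail mu) c n y)); auto.
    - apply (Hsl t).
    - now apply is_int_iter_scal. }
  assert (Hlg : forall t t', Rabs (t' - t) <= 1 -> Rabs (g t' - g t) <= (L * e t * J) * Rabs (t' - t))
    by (intros; now apply (slice_integral_lipschitz n mu c K L f g J)).
  assert (Hgc : forall t, continuous g t).
  { intros t. apply (continuous_of_local_lipschitz g t (Rabs (L * e t * J))); [apply Rabs_pos|].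
    intros t' Ht'. eapply Rle_trans; [now apply Hlg|].
    apply Rmult_le_compat_r; [apply Rabs_pos | apply Rle_abs]. }
  destruct (gauss_shift_le_lorentz c (mu 0%nat) Hc) as [C0 [HC0 HD0]].
  destruct (ex_RInt_improper_dominated g (K * J * C0)) as [I HIg]; auto.
  { intros x. eapply Rle_trans; [apply Hbd|].
    replace (K * J * C0 / (1 + x * x)) with (K * J * (C0 / (1 + x * x))) by (unfold Rdiv; ring).
    apply Rmult_le_compat_l; [nra | apply HD0]. }
  exists I, g. split; auto. now apply is_RInt_improper_equiv.
Qed.

Lemma exp_sub_abs_le a b : Rabs (exp a - exp b) <= Rabs (a - b) * (exp a + exp b).
Proof.
  assert (Hlin : forall u v, exp u - exp v <= (u - v) * exp u).
  { intros u v. pose proof (exp_ineq1_le (v - u)). pose proof (exp_pos u).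
    replace (exp v) with (exp (v - u) * exp u) by (rewrite <- exp_plus; f_equal; ring). nra. }
  pose proof (Hlin a b). pose proof (Hlin b a). pose proof (exp_pos a). pose proof (exp_pos b).
  apply Rabs_le_between. destruct (Rcase_abs (a - b)).
  - rewrite (Rabs_left (a - b)) by lra.
    assert (0 <= (b - a) * exp a) by (apply Rmult_le_pos; lra).
    assert (0 <= (b - a) * exp b) by (apply Rmult_le_pos; lra). split; lra.
  - rewrite (Rabs_right (a - b)) by lra.
    assert (0 <= (a - b) * exp a) by (apply Rmult_le_pos; lra).
    assert (0 <= (a - b) * exp b) by (apply Rmult_le_pos; lra). split; lra.
Qed.

Lemma gauss_controlled_mul_bounded n mu c K L f h B M : gauss_controlled n mu c K L f ->
  (forall y, Rabs (h y) <= B) ->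
  (forall y j s, (j < n)%nat -> Rabs (s - y j) <= 1 ->
     Rabs (h (vupdate y j s) - h y) <= M * Rabs (s - y j)) ->
  gauss_controlled n mu c (B * K) (B * L + M * K) (fun y => f y * h y).
Proof.
  intros Hf HB HM. pose proof (gauss_controlled_nonneg _ _ _ _ _ _ Hf) as HK. destruct Hf as [D Li].
  assert (B0 : 0 <= B) by (pose proof (HB (fun _ => 0)); pose proof (Rabs_pos (h (fun _ => 0))); lra).
  split.
  - intros y. rewrite Rabs_mult. pose proof (D y). pose proof (HB y). pose proof (Rabs_pos (f y)).
    pose proof (Rabs_pos (h y)). pose proof (gauss_weight_pos mu c n y). nra.
  - intros y j s Hj Hs. set (y' := vupdate y j s). set (w := gauss_weight mu c n y).
    replace (f y' * h y' - f y * h y) with ((f y' - f y) * h y' + f y * (h y' - h y)) by ring.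
    eapply Rle_trans; [apply Rabs_triang|]. rewrite !Rabs_mult.
    pose proof (Li y j s Hj Hs). pose proof (HM y j s Hj Hs). pose proof (HB y'). pose proof (D y).
    pose proof (Rabs_pos (f y' - f y)). pose proof (Rabs_pos (f y)). pose proof (Rabs_pos (s - y j)).
    pose proof (gauss_weight_pos mu c n y).
    assert (Rabs (f y' - f y) * Rabs (h y') <= (L * Rabs (s - y j) * w) * B)
      by (apply Rmult_le_compat; auto using Rabs_pos).
    assert (Rabs (f y) * Rabs (h y' - h y) <= (K * w) * (M * Rabs (s - y j)))
      by (apply Rmult_le_compat; auto using Rabs_pos).
    nra.
Qed.

Lemma coord_mul_gauss_weight_le n mu c i : 0 < c -> (i < n)%nat -> exists C, 0 <= C /\ forall y,
  (1 + Rabs (y i)) * gauss_weight mu c n y <= C * gauss_weight mu (c/2) n y.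
Proof.
  intros Hc Hi. destruct (sqr_abs_mul_exp_bounded (c/2)) as [C [HC HCb]]; [lra|].
  exists (C * (1 + Rabs (mu i))). split; [pose proof (Rabs_pos (mu i)); nra|].
  intros y. set (w := vsub y mu). set (Q := dot n w w).
  assert (Hw : w i * w i <= Q) by now apply dot_coord_sqr_le.
  assert (Eq : gauss_weight mu c n y = gauss_weight mu (c/2) n y * exp (-(c/2 * Q))).
  { unfold gauss_weight. fold w Q. rewrite <- exp_plus. f_equal. field. }
  rewrite Eq.
  assert (exp (-(c/2 * Q)) <= exp (-(c/2 * (w i * w i)))) by (apply exp_le_compat; nra).
  specialize (HCb (w i)).
  assert (Hy : Rabs (y i) <= Rabs (w i) + Rabs (mu i)).
  { replace (y i) with (w i + mu i) by (unfold w, vsub; ring). apply Rabs_triang. }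
  pose proof (Rabs_pos (w i)). pose proof (Rabs_pos (mu i)). pose proof (gauss_weight_pos mu (c/2) n y).
  pose proof (exp_pos (-(c/2 * (w i * w i)))). pose proof (exp_pos (-(c/2 * Q))).
  assert ((1 + Rabs (w i)) * exp (-(c/2 * (w i * w i))) <= C) by nra.
  assert ((1 + Rabs (y i)) * exp (-(c/2 * Q)) <= C * (1 + Rabs (mu i))).
  { apply Rle_trans with ((1 + Rabs (w i) + Rabs (mu i)) * exp (-(c/2 * (w i * w i)))).
    - pose proof (Rabs_pos (y i)). apply Rmult_le_compat; lra.
    - assert (exp (-(c/2 * (w i * w i))) <= C) by nra.
      assert (Rabs (mu i) * exp (-(c/2 * (w i * w i))) <= Rabs (mu i) * C)
        by (apply Rmult_le_compat_l; lra).
      nra. }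
  set (g2 := gauss_weight mu (c/2) n y) in *.
  replace ((1 + Rabs (y i)) * (g2 * exp (-(c/2 * Q)))) with (((1 + Rabs (y i)) * exp (-(c/2 * Q))) * g2)
    by ring.
  apply Rmult_le_compat_r; lra.
Qed.

Lemma gauss_controlled_coord_mul n mu c K L f i : 0 < c -> (i < n)%nat -> 0 <= L ->
  gauss_controlled n mu c K L f ->
  exists K' L', gauss_controlled n mu (c/2) K' L' (fun y => y i * f y).
Proof.
  intros Hc Hi HL Hf. pose proof (gauss_controlled_nonneg _ _ _ _ _ _ Hf) as HK. destruct Hf as [D Li].
  destruct (coord_mul_gauss_weight_le n mu c i Hc Hi) as [C [HC HCb]].
  exists (K * C), (K + L + L * C). split.
  - intros y. rewrite Rabs_mult. pose proof (HCb y). pose proof (D y). pose proof (Rabs_pos (y i)).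
    pose proof (Rabs_pos (f y)). pose proof (gauss_weight_pos mu c n y).
    apply Rle_trans with (Rabs (y i) * (K * gauss_weight mu c n y)); [apply Rmult_le_compat_l; lra | nra].
  - intros y j s Hj Hs.
    pose proof (Li y j s Hj Hs) as Hlip. pose proof (D y) as Hdom. pose proof (HCb y) as Hcoord.
    pose proof (gauss_weight_antimono mu c (c/2) n y ltac:(lra)) as Hmono.
    pose proof (gauss_weight_pos mu c n y). pose proof (gauss_weight_pos mu (c/2) n y).
    set (y' := vupdate y j s) in *.
    set (w := gauss_weight mu c n y) in *. set (w2 := gauss_weight mu (c/2) n y) in *.
    assert (Hyi : Rabs (y' i - y i) <= Rabs (s - y j)).
    { unfold y'. destruct (Nat.eq_dec i j).
      - subst. rewrite vupdate_eq. lra.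
      - rewrite vupdate_neq, Rminus_diag, Rabs_R0 by auto. apply Rabs_pos. }
    pose proof (Rabs_pos (y i)). pose proof (Rabs_pos (s - y j)). pose proof (Rabs_pos (f y')).
    pose proof (Rabs_pos (y' i - y i)). pose proof (Rabs_pos (f y' - f y)).
    assert (Hf' : Rabs (f y') <= (K + L) * w).
    { replace (f y') with (f y + (f y' - f y)) by ring.
      eapply Rle_trans; [apply Rabs_triang|].
      assert (L * Rabs (s - y j) * w <= L * w) by (apply Rmult_le_compat_r; nra). lra. }
    replace (y' i * f y' - y i * f y) with ((y' i - y i) * f y' + y i * (f y' - f y)) by ring.
    eapply Rle_trans; [apply Rabs_triang|]. rewrite !Rabs_mult.
    assert (Rabs (y' i - y i) * Rabs (f y') <= Rabs (s - y j) * ((K + L) * w2))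
      by (apply Rmult_le_compat; nra).
    assert (Rabs (y i) * Rabs (f y' - f y) <= L * Rabs (s - y j) * (C * w2)).
    { apply Rle_trans with (Rabs (y i) * (L * Rabs (s - y j) * w)); [apply Rmult_le_compat_l; lra|].
      replace (Rabs (y i) * (L * Rabs (s - y j) * w)) with ((L * Rabs (s - y j)) * (Rabs (y i) * w)) by ring.
      replace (L * Rabs (s - y j) * (C * w2)) with ((L * Rabs (s - y j)) * (C * w2)) by ring.
      apply Rmult_le_compat_l; nra. }
    nra.
Qed.

Lemma gauss_weight_vupdate_sub n mu k y j s : 0 < k -> (j < n)%nat -> Rabs (s - y j) <= 1 ->
  let w := vsub y mu in
  Rabs (gauss_weight mu k n (vupdate y j s) - gauss_weight mu k n y)
  <= 2 * k * exp k * Rabs (s - y j) * ((2 * Rabs (w j) + 1) * exp (-(k * dot n w w / 2))).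
Proof.
  intros Hk Hj Hs w. set (Q := dot n w w). set (dl := s - y j) in *.
  assert (Hwj : w j * w j <= Q) by now apply dot_coord_sqr_le.
  assert (HQ0 : 0 <= Q) by apply dot_nonneg.
  set (Q' := Q - w j * w j + (w j + dl) * (w j + dl)).
  assert (HQ' : dot n (vsub (vupdate y j s) mu) (vsub (vupdate y j s) mu) = Q').
  { rewrite vsub_vupdate. fold w. rewrite dot_vupdate_self by auto. fold Q. unfold Q'.
    f_equal. unfold w, vsub, dl. ring. }
  assert (HQ'b : Q/2 - 1 <= Q').
  { assert (dl * dl <= 1) by (pose proof (proj1 (Rabs_le_between dl 1) Hs); nra).
    pose proof (Rle_0_sqr (w j + 2 * dl)). unfold Q', Rsqr in *. nra. }
  unfold gauss_weight at 1 2. rewrite HQ'. fold w Q.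
  eapply Rle_trans; [apply exp_sub_abs_le|].
  assert (Ha : Rabs (- (k * Q') - - (k * Q)) <= k * Rabs dl * (2 * Rabs (w j) + 1)).
  { replace (- (k * Q') - - (k * Q)) with (-(k * dl * (2 * w j + dl))) by (unfold Q'; ring).
    rewrite Rabs_Ropp, Rabs_mult, (Rabs_mult k dl), (Rabs_pos_eq k) by lra.
    apply Rmult_le_compat_l; [pose proof (Rabs_pos dl); nra|].
    eapply Rle_trans; [apply Rabs_triang|]. rewrite Rabs_mult, (Rabs_pos_eq 2) by lra. lra. }
  assert (exp (-(k * Q')) <= exp k * exp (-(k * Q / 2))) by (rewrite <- exp_plus; apply exp_le_compat; nra).
  assert (exp (-(k * Q)) <= exp k * exp (-(k * Q / 2))) by (rewrite <- exp_plus; apply exp_le_compat; nra).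
  pose proof (Rabs_pos dl). pose proof (Rabs_pos (w j)). pose proof (exp_pos k).
  pose proof (exp_pos (-(k * Q / 2))). pose proof (exp_pos (-(k * Q'))). pose proof (exp_pos (-(k * Q))).
  apply Rle_trans with ((k * Rabs dl * (2 * Rabs (w j) + 1)) * (2 * exp k * exp (-(k * Q / 2)))).
  - apply Rmult_le_compat; [apply Rabs_pos | lra | exact Ha | lra].
  - right. ring.
Qed.

Lemma gauss_controlled_gauss_weight n mu k : 0 < k ->
  exists LG, gauss_controlled n mu (k/4) 1 LG (gauss_weight mu k n).
Proof.
  intros Hk. destruct (sqr_abs_mul_exp_bounded (k/4)) as [C [HC HCb]]; [lra|].
  exists (4 * k * exp k * C). split.
  - intros y. rewrite Rabs_pos_eq, Rmult_1_l by apply Rlt_le, gauss_weight_pos.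
    apply gauss_weight_antimono. lra.
  - intros y j s Hj Hs.
    eapply Rle_trans; [now apply gauss_weight_vupdate_sub|].
    set (w := vsub y mu). set (Q := dot n w w).
    assert (Hwj : w j * w j <= Q) by now apply dot_coord_sqr_le.
    assert (Hdecay : (2 * Rabs (w j) + 1) * exp (-(k * Q / 2)) <= 2 * C * gauss_weight mu (k/4) n y).
    { unfold gauss_weight. fold w Q.
      replace (-(k * Q / 2)) with (-(k/4 * (w j * w j)) + -(k/4 * Q) + -(k/4 * (Q - w j * w j)))
        by field.
      rewrite !exp_plus.
      assert (exp (-(k/4 * (Q - w j * w j))) <= 1) by (rewrite <- exp_0; apply exp_le_compat; nra).
      specialize (HCb (w j)).
      pose proof (exp_pos (-(k/4 * (w j * w j)))). pose proof (exp_pos (-(k/4 * Q))).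
      pose proof (exp_pos (-(k/4 * (Q - w j * w j)))). pose proof (Rabs_pos (w j)).
      assert ((1 + Rabs (w j)) * exp (-(k/4 * (w j * w j))) <= C) by nra.
      assert ((2 * Rabs (w j) + 1) * exp (-(k/4 * (w j * w j))) <= 2 * C) by nra.
      apply Rle_trans with ((2 * Rabs (w j) + 1) * exp (-(k/4 * (w j * w j))) * exp (-(k/4 * Q)) * 1).
      - rewrite !Rmult_assoc. repeat apply Rmult_le_compat_l; lra.
      - rewrite Rmult_1_r. apply Rmult_le_compat_r; lra. }
    pose proof (Rabs_pos (s - y j)). pose proof (exp_pos k).
    replace (4 * k * exp k * C * Rabs (s - y j) * gauss_weight mu (k / 4) n y)
      with (2 * k * exp k * Rabs (s - y j) * (2 * C * gauss_weight mu (k / 4) n y)) by ring.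
    apply Rmult_le_compat_l; [|exact Hdecay].
    apply Rmult_le_pos; [|lra]. nra.
Qed.

(** * The EM operator *)

Lemma omega_abs_le_1 u : Rabs (omega u) <= 1.
Proof.
  unfold omega. pose proof (exp_pos (-2 * u)).
  rewrite Rabs_pos_eq by (apply Rlt_le, Rdiv_lt_0_compat; lra).
  unfold Rdiv. rewrite Rmult_1_l, <- Rinv_1. apply Rinv_le_contravar; lra.
Qed.

Lemma omega_lipschitz u v : Rabs (omega u - omega v) <= 2 * Rabs (u - v).
Proof.
  unfold omega. pose proof (exp_pos (-2 * u)). pose proof (exp_pos (-2 * v)).
  set (D := (1 + exp (-2 * u)) * (1 + exp (-2 * v))). assert (HD : 0 < D) by (unfold D; nra).
  replace (1 / (1 + exp (-2 * u)) - 1 / (1 + exp (-2 * v)))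
    with ((exp (-2 * v) - exp (-2 * u)) / D) by (unfold D; field; lra).
  unfold Rdiv. rewrite Rabs_mult, Rabs_inv, (Rabs_pos_eq D) by lra.
  pose proof (exp_sub_abs_le (-2 * v) (-2 * u)) as Hexp.
  replace (-2 * v - -2 * u) with (2 * (u - v)) in Hexp by ring.
  rewrite Rabs_mult, (Rabs_pos_eq 2) in Hexp by lra.
  apply Rmult_le_reg_r with D; auto. rewrite Rmult_assoc, Rinv_l by lra.
  pose proof (Rabs_pos (u - v)).
  assert (2 * Rabs (u - v) * (exp (-2 * v) + exp (-2 * u)) <= 2 * Rabs (u - v) * D)
    by (apply Rmult_le_compat_l; unfold D; nra).
  lra.
Qed.

Lemma omega_dot_vupdate_lipschitz n theta sigma y j s : 0 < sigma -> (j < n)%nat ->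
  Rabs (omega (dot n theta (vupdate y j s) / sigma ^ 2) - omega (dot n theta y / sigma ^ 2))
  <= (2 * (1 + dot n theta theta) / sigma ^ 2) * Rabs (s - y j).
Proof.
  intros Hs Hj. eapply Rle_trans; [apply omega_lipschitz|].
  assert (Hs2 : 0 < sigma ^ 2) by (apply pow_lt; lra).
  rewrite dot_vupdate_r by auto.
  replace ((dot n theta y + theta j * (s - y j)) / sigma ^ 2 - dot n theta y / sigma ^ 2)
    with (theta j * (s - y j) / sigma ^ 2) by (field; lra).
  unfold Rdiv. rewrite !Rabs_mult, Rabs_inv, (Rabs_pos_eq (sigma ^ 2)) by lra.
  assert (Rabs (theta j) <= 1 + dot n theta theta).
  { pose proof (dot_coord_sqr_le n theta j Hj). pose proof (Rabs_pos (theta j)).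
    rewrite <- (Rabs_pos_eq (theta j * theta j)), Rabs_mult in * by nra.
    pose proof (Rle_0_sqr (Rabs (theta j) - 1)). unfold Rsqr in *. nra. }
  pose proof (Rabs_pos (s - y j)). pose proof (Rinv_0_lt_compat _ Hs2).
  replace (2 * (1 + dot n theta theta) * / sigma ^ 2 * Rabs (s - y j))
    with (2 * ((1 + dot n theta theta) * (Rabs (s - y j) * / sigma ^ 2))) by ring.
  apply Rmult_le_compat_l; [lra|].
  rewrite Rmult_assoc. apply Rmult_le_compat_r; nra.
Qed.

Lemma ex_int_iter_coord_omega_gauss d sigma mu theta i : 0 < sigma -> (i < d)%nat ->
  exists I, is_int_iter d
    (fun y => y i * (gauss_weight mu (/(2 * sigma ^ 2)) d y * omega (dot d theta y / sigma ^ 2))) I.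
Proof.
  intros Hs Hi. set (k := /(2 * sigma ^ 2)).
  assert (Hs2 : 0 < sigma ^ 2) by (apply pow_lt; lra).
  assert (Hk : 0 < k) by (apply Rinv_0_lt_compat; lra).
  destruct (gauss_controlled_gauss_weight d mu k Hk) as [LG HG].
  set (M := 2 * (1 + dot d theta theta) / sigma ^ 2).
  assert (HM : 0 <= M).
  { pose proof (dot_nonneg d theta). apply Rmult_le_pos; [lra | left; now apply Rinv_0_lt_compat]. }
  assert (HLG : 0 <= LG).
  { destruct HG as [_ HL]. specialize (HL (fun _ => 0) 0%nat 1 ltac:(lia)).
    rewrite Rminus_0_r, Rabs_R1, Rmult_1_r in HL.
    pose proof (Rabs_pos (gauss_weight mu k d (vupdate (fun _ => 0) 0 1) - gauss_weight mu k d (fun _ => 0))).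
    pose proof (gauss_weight_pos mu (k/4) d (fun _ => 0)). nra. }
  assert (Hmul := gauss_controlled_mul_bounded d mu (k/4) 1 LG (gauss_weight mu k d)
     (fun y => omega (dot d theta y / sigma ^ 2)) 1 M HG
     (fun y => omega_abs_le_1 _) (fun y j s Hj _ => omega_dot_vupdate_lipschitz d theta sigma y j s Hs Hj)).
  destruct (gauss_controlled_coord_mul d mu (k/4) (1 * 1) (1 * LG + M * 1) _ i ltac:(lra) Hi ltac:(nra) Hmul)
    as [K' [L' H3]].
  apply (ex_int_iter_gauss_controlled d mu (k/4/2) K' L'); [lra | exact H3].
Qed.

Lemma gauss_density_weight d sigma mu y :
  gauss_density d sigma mu y = gauss_weight mu (/(2 * sigma ^ 2)) d y / sqrt (2 * PI * sigma ^ 2) ^ d.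
Proof.
  unfold gauss_density, gauss_weight. change (fun i => y i - mu i) with (vsub y mu).
  do 2 f_equal. unfold Rdiv. ring.
Qed.

Lemma ex_EM d sigma ts theta : 0 < sigma -> exists m, is_EM d sigma ts theta m.
Proof.
  intros Hs.
  assert (Hex : forall i, exists v, (i < d)%nat ->
    is_int_iter d (fun y => 2 * (y i * omega (dot d theta y / sigma ^ 2)) * mix_density d sigma ts y) v).
  { intros i. destruct (Nat.lt_ge_cases i d) as [Hi|Hi]; [|exists 0; lia].
    destruct (ex_int_iter_coord_omega_gauss d sigma ts theta i Hs Hi) as [I1 H1].
    destruct (ex_int_iter_coord_omega_gauss d sigma (fun j => - ts j) theta i Hs Hi) as [I2 H2].
    set (N := sqrt (2 * PI * sigma ^ 2) ^ d).
    assert (HN : 0 < N) by (apply pow_lt, normal_const_pos; auto).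
    eexists. intros _. refine (is_int_iter_ext _ _ _ _ _ _ eq_refl
      (is_int_iter_plus _ _ _ _ _ (is_int_iter_scal _ _ (/N) _ H1) (is_int_iter_scal _ _ (/N) _ H2))).
    intros y. unfold mix_density. rewrite !gauss_density_weight. fold N. field. lra. }
  destruct (choice _ Hex) as [m Hm]. now exists m.
Qed.

(** * Norm bound *)

Lemma gauss_density_cons k sigma mu t y : 0 < sigma ->
  gauss_density (S k) sigma mu (cons_vec t y) = normal_pdf (mu 0%nat) sigma t * gauss_density k sigma (vtail mu) y.
Proof.
  intros Hs. unfold gauss_density, normal_pdf, normal_kernel.
  change (fun i => cons_vec t y i - mu i) with (vsub (cons_vec t y) mu).
  change (fun i => y i - vtail mu i) with (vsub y (vtail mu)).
  rewrite vsub_cons, dot_cons. pose proof (normal_const_pos sigma Hs).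
  set (q := dot k (vsub y (vtail mu)) (vsub y (vtail mu))).
  replace (- ((t - mu 0%nat) * (t - mu 0%nat) + q) / (2 * sigma ^ 2))
    with (- ((t - mu 0%nat) * (t - mu 0%nat)) / (2 * sigma ^ 2) + - q / (2 * sigma ^ 2)) by (field; lra).
  rewrite exp_plus. change (sqrt (2 * PI * sigma ^ 2) ^ S k)
    with (sqrt (2 * PI * sigma ^ 2) * sqrt (2 * PI * sigma ^ 2) ^ k).
  field. split; [apply pow_nonzero|]; lra.
Qed.

Lemma is_int_iter_gauss_density_sqr_affine sigma n : 0 < sigma -> forall mu alpha m A B,
  is_int_iter n (fun y => (A * ((alpha + dot n m y) * (alpha + dot n m y)) + B) * gauss_density n sigma mu y)
    (A * ((alpha + dot n m mu) * (alpha + dot n m mu) + sigma ^ 2 * dot n m m) + B).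
Proof.
  intros Hs. induction n; intros mu alpha m A B.
  - simpl. unfold gauss_density. simpl.
    replace (- 0 / (2 * (sigma * (sigma * 1)))) with 0 by (field; lra). rewrite exp_0. field.
  - set (P := dot n (vtail m) (vtail mu)). set (N' := dot n (vtail m) (vtail m)).
    exists (fun t => normal_pdf (mu 0%nat) sigma t
                     * (A * ((alpha + m 0%nat * t + P) * (alpha + m 0%nat * t + P) + sigma ^ 2 * N') + B)).
    split.
    + intros t. refine (is_int_iter_ext _ _ _ _ _ _ _ (is_int_iter_scal _ _ (normal_pdf (mu 0%nat) sigma t) _
                          (IHn (vtail mu) (alpha + m 0%nat * t) (vtail m) A B))).
      * intros y. rewrite gauss_density_cons, dot_S_tail by auto.
        change (vtail (cons_vec t y)) with y. simpl. ring.
      * fold P N'. ring.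
    + apply is_RInt_improper_equiv.
      refine (is_RInt_improper_ext _ _ _ _ _ _ (is_RInt_improper_plus _ _ _ _
        (is_RInt_improper_scal _ (A * (m 0%nat * m 0%nat)) _ (is_RInt_improper_normal_pdf_m2 (mu 0%nat) sigma Hs))
        (is_RInt_improper_plus _ _ _ _
          (is_RInt_improper_scal _ (2 * A * m 0%nat * (alpha + P)) _ (is_RInt_improper_normal_pdf_m1 (mu 0%nat) sigma Hs))
          (is_RInt_improper_scal _ (A * ((alpha + P) * (alpha + P)) + A * sigma ^ 2 * N' + B) _
             (is_RInt_improper_normal_pdf (mu 0%nat) sigma Hs))))).
      * intros t. ring.
      * rewrite !dot_S_tail. fold P N'. ring.
Qed.

Lemma is_int_iter_dot d (f : nat -> (nat -> R) -> R) (m : nat -> R) :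
  (forall i, (i < d)%nat -> is_int_iter d (f i) (m i)) ->
  forall k, (k <= d)%nat -> is_int_iter d (fun y => dot k m (fun i => f i y)) (dot k m m).
Proof.
  intros H. induction k; intros Hk; [apply is_int_iter_zero|].
  apply (is_int_iter_plus _ _ _ _ _ (IHk ltac:(lia)) (is_int_iter_scal _ _ (m k) _ (H k ltac:(lia)))).
Qed.

Lemma two_abs_le_sqr_div_add X c : 0 < c -> 2 * Rabs X <= X * X / c + c.
Proof.
  intros Hc. pose proof (Rle_0_sqr (Rabs X - c)). unfold Rsqr in H.
  rewrite <- (Rabs_pos_eq (X * X)), Rabs_mult by nra.
  apply Rmult_le_reg_r with c; auto.
  replace ((Rabs X * Rabs X / c + c) * c) with (Rabs X * Rabs X + c * c) by (field; lra). nra.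
Qed.

Lemma mix_density_nonneg d sigma ts y : 0 < sigma -> 0 <= mix_density d sigma ts y.
Proof.
  intros Hs. unfold mix_density. rewrite !gauss_density_weight.
  pose proof (gauss_weight_pos ts (/(2 * sigma ^ 2)) d y).
  pose proof (gauss_weight_pos (fun i => - ts i) (/(2 * sigma ^ 2)) d y).
  assert (0 < / sqrt (2 * PI * sigma ^ 2) ^ d) by (apply Rinv_0_lt_compat, pow_lt, normal_const_pos; auto).
  unfold Rdiv. nra.
Qed.

Lemma EM_integrand_dot_le d sigma ts theta m y c : 0 < sigma -> 0 < c ->
  dot d m (fun i => 2 * (y i * omega (dot d theta y / sigma ^ 2)) * mix_density d sigma ts y)
  <= (dot d m y * dot d m y / c + c) * mix_density d sigma ts y.
Proof.
  intros Hs Hc. set (X := dot d m y). set (w := omega (dot d theta y / sigma ^ 2)).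
  set (p := mix_density d sigma ts y).
  rewrite (dot_ext d m m _ (fun i => y i * (2 * w * p))) by (intros; split; [|unfold w, p]; ring).
  rewrite dot_scal_r. fold X.
  assert (Hp : 0 <= p) by now apply mix_density_nonneg.
  assert (X * w <= Rabs X).
  { rewrite <- (Rmult_1_r (Rabs X)). eapply Rle_trans; [apply Rle_abs|]. rewrite Rabs_mult.
    apply Rmult_le_compat_l; [apply Rabs_pos | apply omega_abs_le_1]. }
  pose proof (two_abs_le_sqr_div_add X c Hc).
  replace (X * (2 * w * p)) with ((X * (2 * w)) * p) by ring.
  apply Rmult_le_compat_r; lra.
Qed.

(* [|m|^2 = E[2 <m, Y> omega] <= E[<m, Y>^2] / c + c] and [E[<m, Y>^2] = <m, theta*>^2 + sigma^2 |m|^2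
   <= |m|^2 T] by Cauchy-Schwarz; the choice [c = 2 T] gives [|m|^2 <= 4 T]. *)
Lemma EM_norm_sqr_le d sigma ts theta m : 0 < sigma -> is_EM d sigma ts theta m ->
  dot d m m <= 4 * (dot d ts ts + sigma ^ 2).
Proof.
  intros Hs Hm.
  set (T := dot d ts ts + sigma ^ 2). set (c := 2 * T).
  assert (Hs2 : 0 < sigma ^ 2) by (apply pow_lt; lra).
  assert (HT : 0 < T) by (unfold T; pose proof (dot_nonneg d ts); lra).
  assert (Hc : 0 < c) by (unfold c; lra).
  set (D := dot d m ts).
  assert (Hmom : is_int_iter d (fun y => (dot d m y * dot d m y / c + c) * mix_density d sigma ts y)
                   (/ c * (D * D + sigma ^ 2 * dot d m m) + c)).
  { refine (is_int_iter_ext _ _ _ _ _ _ _ (is_int_iter_plus _ _ _ _ _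
      (is_int_iter_scal _ _ (/2) _ (is_int_iter_gauss_density_sqr_affine sigma d Hs ts 0 m (/c) c))
      (is_int_iter_scal _ _ (/2) _ (is_int_iter_gauss_density_sqr_affine sigma d Hs (fun j => - ts j) 0 m (/c) c)))).
    - intros y. unfold mix_density, Rdiv. ring.
    - rewrite dot_opp_r. fold D. field. lra. }
  assert (Hle := is_int_iter_le d _ _ _ _ (fun y => EM_integrand_dot_le d sigma ts theta m y c Hs Hc)
                   (is_int_iter_dot d _ m Hm d (le_n d)) Hmom).
  assert (D * D <= dot d m m * dot d ts ts) by apply dot_Cauchy_Schwarz.
  pose proof (dot_nonneg d m).
  apply Rmult_le_compat_l with (r := c) in Hle; [|lra].
  replace (c * (/ c * (D * D + sigma ^ 2 * dot d m m) + c)) with (D * D + sigma ^ 2 * dot d m m + c * c)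
    in Hle by (field; lra).
  unfold c, T in *. nra.
Qed.

Lemma sqrt_four_sqr_add_lt_kappa_r V sigma a kappa2 r :
  0 < sigma -> 0 < V -> 0 < a < 1 -> 0 < kappa2 < 1 -> 4 / kappa2 <= r ->
  r <= a * (V / sigma) / sqrt (5 * ln (8 / kappa2)) ->
  sqrt (4 * (V * V + sigma ^ 2)) < kappa2 * r * V.
Proof.
  intros Hs HV Ha Hk Hr1 Hr2.
  assert (H8 : 8 < 8 / kappa2).
  { apply Rmult_lt_reg_r with kappa2; [lra|]. unfold Rdiv. rewrite Rmult_assoc, Rinv_l by lra. nra. }
  assert (Hln : 1 < ln (8 / kappa2)).
  { rewrite <- (ln_exp 1) at 1. apply ln_increasing; [apply exp_pos|]. pose proof exp_le_3. lra. }
  set (W := sqrt (5 * ln (8 / kappa2))) in *.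
  assert (HW : 1 < W) by (unfold W; rewrite <- sqrt_1; apply sqrt_lt_1_alt; lra).
  assert (Hkr : 4 <= kappa2 * r).
  { apply Rmult_le_compat_l with (r := kappa2) in Hr1; [|lra].
    replace (kappa2 * (4 / kappa2)) with 4 in Hr1 by (field; lra). lra. }
  assert (Hr4 : 4 < r).
  { apply Rlt_le_trans with (4 / kappa2); [|lra].
    apply Rmult_lt_reg_r with kappa2; [lra|]. unfold Rdiv. rewrite Rmult_assoc, Rinv_l by lra. nra. }
  assert (HVs : r < V / sigma).
  { eapply Rle_lt_trans; [exact Hr2|]. assert (0 < V / sigma) by (apply Rdiv_lt_0_compat; lra).
    apply Rmult_lt_reg_r with W; [lra|]. unfold Rdiv at 1. rewrite Rmult_assoc, Rinv_l by lra. nra. }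
  assert (HV4 : 4 * sigma < V).
  { apply Rmult_lt_compat_r with (r := sigma) in HVs; [|lra].
    unfold Rdiv in HVs. rewrite Rmult_assoc, Rinv_l in HVs by lra. nra. }
  rewrite <- (sqrt_square (kappa2 * r * V)) by nra.
  apply sqrt_lt_1_alt. split; [nra|].
  assert (16 * (V * V) <= (kappa2 * r) * (kappa2 * r) * (V * V)) by (apply Rmult_le_compat_r; nra).
  simpl. nra.
Qed.

Theorem lemma3 (d : nat) (sigma : R) (ts : nat -> R)
  (a kappa2 r : R) (theta : nat -> R) :
  (1 <= d)%nat -> 0 < sigma ->
  (exists i : nat, (i < d)%nat /\ ts i <> 0) ->
  0 < a < 1 -> 0 < kappa2 < 1 ->
  4 / kappa2 <= r ->
  r <= a * (vnorm d ts / sigma) / sqrt (5 * ln (8 / kappa2)) ->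
  a * (vnorm d ts) ^ 2 <= dot d theta ts ->
  vnorm d theta <= r * vnorm d ts ->
  exists m : nat -> R,
    is_EM d sigma ts theta m /\ vnorm d m < kappa2 * r * vnorm d ts.
Proof.
  intros _ Hs [i0 [Hi0 Hts]] Ha Hk Hr1 Hr2 _ _.
  destruct (ex_EM d sigma ts theta Hs) as [m Hm].
  exists m. split; [exact Hm|].
  assert (HS : 0 < dot d ts ts).
  { pose proof (Rsqr_pos_lt _ Hts). pose proof (dot_coord_sqr_le d ts i0 Hi0). unfold Rsqr in *. lra. }
  assert (HV : 0 < vnorm d ts) by now apply sqrt_lt_R0.
  assert (HVV : vnorm d ts * vnorm d ts = dot d ts ts) by (apply sqrt_sqrt; lra).
  apply Rle_lt_trans with (sqrt (4 * (vnorm d ts * vnorm d ts + sigma ^ 2))).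
  - apply sqrt_le_1_alt. rewrite HVV. now apply (EM_norm_sqr_le d sigma ts theta).
  - now apply (sqrt_four_sqr_add_lt_kappa_r _ sigma a).
Qed.
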